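(* Suppose $F$ is a $\mu$-PL function for some $\mu>0$. Let $b\le n$ and $\eta=\rho/L$ where $0<\rho\le 1/5$ satisfies $$\frac{16n^2\rho^2}{b^3}+\rho\le 1,$$ and let $T=\lceil 6L/(\mu\rho)\rceil$. Then for every integer $K\ge1$, the output $x^K$ of PL-SAGA$(x^0,K,T,b,\eta)$ satisfies $$\mathbb E\big[F(x^K)-F(x^* )\big]\le \frac{F(x^0)-F(x^* )}{2^K},$$ where $x^*$ is an optimal solution of $\min_x F(x)$.
   Context: Setting: Let $n,d\ge 1$ be integers and $[n]=\{1,\dots,n\}$. Let $f_1,\dots,f_n:\mathbb R^d\to\mathbb R$ be differentiable (possibly nonconvex) functions, each $L$-smooth for some $L>0$, i.e. $\|\nabla f_i(x)-\nabla f_i(y)\|\le L\|x-y\|$ for all $x,y\in\mathbb R^d$ and $i\in[n]$. Let $f=\frac1n\sum_{i=1}^n f_i$. Let $h:\mathbb R^d\to\mathbb R\cup\{+\infty\}$ be proper, lower semicontinuous and convex, with closed domain. Let $F=f+h$, and let $x^*$ be a global minimizer of $F$ on $\mathbb R^d$ (assumed to exist). For $\eta>0$, $\mathrm{prox}_{\eta h}(x):=\arg\min_{y\in\mathbb R^d}\big(h(y)+\frac1{2\eta}\|y-x\|^2\big)$. $\mu$-PL functions: for $x\in\mathbb R^d$ and $\alpha>0$ define $D_h(x,\alpha):=-2\alpha\min_{y\in\mathbb R^d}\big[\langle\nabla f(x),y-x\rangle+\frac{\alpha}{2}\|y-x\|^2+h(y)-h(x)\big]$. $F$ is called $\mu$-PL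 ($\mu>0$) if $\mu\,(F(x)-F(x^* ))\le \frac12 D_h(x,\mu)$ for all $x\in\mathrm{dom}(h)$. Algorithm ProxSAGA$(x^0,T,b,\eta)$: Given $x^0\in\mathbb R^d$, positive integers $T,b$ and $\eta>0$, set $\alpha^0_i=x^0$ for all $i\in[n]$. For $t=0,1,\dots$ let $g^t=\frac1n\sum_{i=1}^n\nabla f_i(\alpha^t_i)$. For $t=0,\dots,T-1$: draw two multisets $I_t,J_t$, each consisting of $b$ indices drawn independently and uniformly at random from $[n]$ (with replacement; $I_t$, $J_t$ independent of each other and of all previous draws); set $v^t=\frac1b\sum_{i\in I_t}\big(\nabla f_i(x^t)-\nabla f_i(\alpha^t_i)\big)+g^t$ and $x^{t+1}=\mathrm{prox}_{\eta h}(x^t-\eta v^t)$; set $\alpha^{t+1}_j=x^t$ for $j\in J_t$ and $\alpha^{t+1}_j=\alpha^t_j$ for $j\notin J_t$. The output $x_a$ is chosen uniformly at random from $\{x^0,\dots,x^{T-1}\}$. Algorithm PL-SAGA$(x^0,K,T,b,\eta)$: for $k=1,\dots,K$, let $x^k$ be the output $x_a$ of ProxSAGA$(x^{k-1},T,b,\eta)$ (run with fresh independent randomness); output $x^K$. Expectations are over all randomness. *)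

From Stdlib Require Import Reals.
From HB Require Import structures.
From mathcomp Require Import all_boot.

Set Implicit Arguments.
Unset Strict Implicit.
Unset Printing Implicit Defensive.

Local Open Scope R_scope.

Definition vec (d : nat) := 'I_d -> R.

Definition vadd d (u v : vec d) : vec d := fun i => u i + v i.
Definition vsub d (u v : vec d) : vec d := fun i => u i - v i.
Definition vscale d (a : R) (u : vec d) : vec d := fun i => a * u i.
Definition inner d (u v : vec d) : R := \big[Rplus/0]_(i < d) (u i * v i).
Definition norm d (u : vec d) : R := sqrt (inner u u).

Definition is_gradient d (f : vec d -> R) (g : vec d -> vec d) : Prop :=
  forall x eps, 0 < eps -> exists delta, 0 < delta /\
    forall y, norm (vsub y x) < delta ->
      Rabs (f y - f x - inner (g x) (vsub y x)) <= eps * norm (vsub y x).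

Definition lipschitz_grad d (L : R) (g : vec d -> vec d) : Prop :=
  forall x y, norm (vsub (g x) (g y)) <= L * norm (vsub x y).

(* h : R^d -> R u {+oo} is represented by its domain [dom] and its (finite)
   values [h] on the domain; h = +oo outside [dom]. *)
Definition proper_lsc_convex_closed_dom d (dom : vec d -> Prop) (h : vec d -> R) : Prop :=
  (exists x, dom x) /\
  (forall x y t, dom x -> dom y -> 0 <= t <= 1 ->
     dom (vadd (vscale t x) (vscale (1 - t) y)) /\
     h (vadd (vscale t x) (vscale (1 - t) y)) <= t * h x + (1 - t) * h y) /\
  (forall x, (forall eps, 0 < eps -> exists y, dom y /\ norm (vsub y x) < eps) -> dom x) /\
  (* lower semicontinuous (at points outside dom this follows from closedness) *)
  (forall x, dom x -> forall eps, 0 < eps -> exists delta, 0 < delta /\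
     forall y, dom y -> norm (vsub y x) < delta -> h x - eps < h y).

Definition is_prox d (dom : vec d -> Prop) (h : vec d -> R) (eta : R)
  (p : vec d -> vec d) : Prop :=
  forall x, dom (p x) /\
    forall y, dom y ->
      h (p x) + / (2 * eta) * (norm (vsub (p x) x))^2
        <= h y + / (2 * eta) * (norm (vsub y x))^2.

Definition is_min_value d (dom : vec d -> Prop) (Q : vec d -> R) (m : R) : Prop :=
  (exists y, dom y /\ Q y = m) /\ forall y, dom y -> m <= Q y.

Definition favg n d (fs : 'I_n -> vec d -> R) (x : vec d) : R :=
  / INR n * \big[Rplus/0]_(i < n) fs i x.
Definition gavg n d (gs : 'I_n -> vec d -> vec d) (x : vec d) : vec d :=
  fun k => / INR n * \big[Rplus/0]_(i < n) gs i x k.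

Definition is_Dh n d (gs : 'I_n -> vec d -> vec d) (dom : vec d -> Prop)
  (h : vec d -> R) (x : vec d) (alpha D : R) : Prop :=
  exists m, is_min_value dom
    (fun y => inner (gavg gs x) (vsub y x) + alpha / 2 * (norm (vsub y x))^2 + h y - h x) m
    /\ D = -2 * alpha * m.

Definition is_PL n d (fs : 'I_n -> vec d -> R) (gs : 'I_n -> vec d -> vec d)
  (dom : vec d -> Prop) (h : vec d -> R) (Fstar mu : R) : Prop :=
  forall x, dom x -> forall D, is_Dh gs dom h x mu D ->
    mu * (favg fs x + h x - Fstar) <= / 2 * D.

(* randomness of one inner step: the multisets I_t and J_t *)
Definition step_rand n b := (b.-tuple 'I_n * b.-tuple 'I_n)%type.
(* randomness of one ProxSAGA run: T steps and the output index a *)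
Definition epoch_rand n b T := (T.-tuple (step_rand n b) * 'I_T)%type.

(* state: (x^t, (alpha^t_i)_i, [x^0; ...; x^{t-1}]) *)
Definition saga_state n d := (vec d * ('I_n -> vec d) * seq (vec d))%type.

Definition saga_step n d b (gs : 'I_n -> vec d -> vec d) (eta : R)
  (prox : vec d -> vec d) (st : saga_state n d) (w : step_rand n b)
  : saga_state n d :=
  let: (x, al, hist) := st in
  let: (Is, Js) := w in
  let g : vec d := fun k => / INR n * \big[Rplus/0]_(i < n) gs i (al i) k in
  let v : vec d := fun k =>
    / INR b * \big[Rplus/0]_(i <- tval Is) (gs i x k - gs i (al i) k) + g k in
  let x' := prox (vsub x (vscale eta v)) in
  let al' := fun j => if j \in tval Js then x else al j in
  (x', al', rcons hist x).

Definition prox_saga n d b T (gs : 'I_n -> vec d -> vec d) (eta : R)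
  (prox : vec d -> vec d) (x0 : vec d) (w : epoch_rand n b T) : vec d :=
  let: (steps, a) := w in
  let: (_, _, hist) :=
    foldl (saga_step gs eta prox) (x0, (fun _ => x0), [::]) (tval steps) in
  nth x0 hist a.

Definition pl_saga n d b T K (gs : 'I_n -> vec d -> vec d) (eta : R)
  (prox : vec d -> vec d) (x0 : vec d) (w : K.-tuple (epoch_rand n b T)) : vec d :=
  foldl (prox_saga gs eta prox) x0 (tval w).

Definition expect (Omega : finType) (X : Omega -> R) : R :=
  / INR #|{: Omega}| * \big[Rplus/0]_(w : Omega) X w.

Definition ceilR (x : R) : Z := (- Int_part (- x))%Z.

(* Each inner step of ProxSAGA decreases, in expectation, the Lyapunov function
     F(x) - F_min + c/n sum_i ||x - alpha_i||^2 + mu eta sum_{s<t} (F(x^s) - F_min),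
   where c = 2 eta L^2 n / b^2.  The prox-gradient step with the exact gradient
   decreases the gap by the factor 1 - mu eta (this is where the PL inequality
   enters); the error of the SAGA estimator has variance at most
   L^2/(b n) sum_i ||x - alpha_i||^2; and an anchor alpha_j survives a step with
   probability (1 - 1/n)^b <= 1/(1 + b/n).  The step-size condition on rho makes
   these three effects balance.  Telescoping over T steps bounds the average gap
   of an epoch by (F(x^0) - F_min) / (mu eta T) <= (F(x^0) - F_min) / 2, and the
   K restarts of PL-SAGA multiply these factors.
   Using the PL inequality at x requires the minimum defining D_h(x, mu) to be
   attained; it is the prox-gradient point of step 1/mu, and prox operators of
   every step size are obtained from the given one by Banach's fixed point
   theorem. *)
From Stdlib Require Import Reals.
From HB Require Import structures.
From mathcomp Require Import all_boot.
From Stdlib Require Import Lra Lia FunctionalExtensionality IndefiniteDescription.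

Set Implicit Arguments.
Unset Strict Implicit.
Unset Printing Implicit Defensive.

Local Open Scope R_scope.

Ltac vext := apply: functional_extensionality => ?; rewrite /vadd /vsub /vscale; ring.

Lemma RplusA : associative Rplus. Proof. by move=> *; ring. Qed.
Lemma RmultA : associative Rmult. Proof. by move=> *; ring. Qed.
HB.instance Definition _ :=
  Monoid.isComLaw.Build R 0 Rplus RplusA Rplus_comm Rplus_0_l.
HB.instance Definition _ :=
  Monoid.isComLaw.Build R 1 Rmult RmultA Rmult_comm Rmult_1_l.
HB.instance Definition _ := Monoid.isMulLaw.Build R 0 Rmult Rmult_0_l Rmult_0_r.
HB.instance Definition _ :=
  Monoid.isAddLaw.Build R Rmult Rplus Rmult_plus_distr_r Rmult_plus_distr_l.

Section BigR.
Variables (I : Type) (r : seq I) (P : pred I).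

Lemma big_Rle (F G : I -> R) : (forall i, P i -> F i <= G i) ->
  \big[Rplus/0]_(i <- r | P i) F i <= \big[Rplus/0]_(i <- r | P i) G i.
Proof.
move=> FG; elim/big_rec2: _ => [|i a b Pi ab]; first lra.
by have := FG i Pi; lra.
Qed.

Lemma big_Rge0 (F : I -> R) : (forall i, P i -> 0 <= F i) ->
  0 <= \big[Rplus/0]_(i <- r | P i) F i.
Proof.
move=> F0; elim/big_rec: _ => [|i a Pi a0]; first lra.
by have := F0 i Pi; lra.
Qed.

Lemma big_Ropp (F : I -> R) :
  \big[Rplus/0]_(i <- r | P i) - F i = - \big[Rplus/0]_(i <- r | P i) F i.
Proof. by elim/big_rec2: _ => [|i a b _ ->]; lra. Qed.

Lemma big_Rminus (F G : I -> R) :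
  \big[Rplus/0]_(i <- r | P i) (F i - G i) =
  \big[Rplus/0]_(i <- r | P i) F i - \big[Rplus/0]_(i <- r | P i) G i.
Proof. by rewrite big_split big_Ropp. Qed.

End BigR.

Lemma big_Rconst (I : Type) (r : seq I) (c : R) :
  \big[Rplus/0]_(i <- r) c = INR (size r) * c.
Proof.
elim: r => [|x r IH]; first by rewrite big_nil /=; lra.
by rewrite big_cons IH (_ : size (x :: r) = (size r).+1) // S_INR; lra.
Qed.

Lemma big_Rconst_card (I : finType) (c : R) : \big[Rplus/0]_(i : I) c = INR #|I| * c.
Proof. by rewrite -big_enum big_Rconst cardE. Qed.

Lemma INR_card_gt0 (T : finType) (t : T) : 0 < INR #|T|.
Proof. by apply/lt_0_INR/ltP/card_gt0P; exists t. Qed.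

Section Expectation.
Variable T : finType.
Implicit Types X Y : T -> R.

Lemma eq_expect X Y : (forall w, X w = Y w) -> expect X = expect Y.
Proof. by move=> XY; rewrite /expect; congr (_ * _); apply: eq_bigr. Qed.

Lemma le_expect X Y : (forall w, X w <= Y w) -> expect X <= expect Y.
Proof.
move=> XY; apply: Rmult_le_compat_l; last exact: big_Rle.
have [/Rinv_0_lt_compat/Rlt_le //|<-] := pos_INR #|{: T}|.
by rewrite Rinv_0; lra.
Qed.

Lemma expectD X Y : expect (fun w => X w + Y w) = expect X + expect Y.
Proof. by rewrite /expect big_split /=; lra. Qed.

Lemma expectZ a X : expect (fun w => a * X w) = a * expect X.
Proof. by rewrite /expect -big_distrr /=; lra. Qed.

Lemma expect_cst (t : T) c : expect (fun _ : T => c) = c.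
Proof. by rewrite /expect big_Rconst_card; have := INR_card_gt0 t => ?; field; lra. Qed.

Lemma expect_sum (I : Type) (r : seq I) (X : I -> T -> R) :
  expect (fun w => \big[Rplus/0]_(k <- r) X k w) = \big[Rplus/0]_(k <- r) expect (X k).
Proof. by rewrite /expect exchange_big big_distrr. Qed.

End Expectation.

Lemma expect_ordE n (X : 'I_n -> R) : expect X = / INR n * \big[Rplus/0]_(i < n) X i.
Proof. by rewrite /expect card_ord. Qed.

Lemma expect_pair (A B : finType) (X : A * B -> R) :
  expect X = expect (fun a => expect (fun b => X (a, b))).
Proof.
rewrite /expect card_prod mult_INR.
have -> : \big[Rplus/0]_(p : A * B) X p =
    \big[Rplus/0]_(a : A) \big[Rplus/0]_(b : B) X (a, b).
  by rewrite pair_bigA; apply: eq_bigr => -[].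
by rewrite -big_distrr /= Rinv_mult; lra.
Qed.

Lemma expect_tuple0 (T : finType) (X : 0.-tuple T -> R) : expect X = X [tuple].
Proof.
rewrite /expect card_tuple expn0 (big_pred1 [tuple]) /=; first lra.
by move=> t; apply/esym/eqP/val_inj; case: t => -[].
Qed.

Lemma expect_tupleS (T : finType) k (X : k.+1.-tuple T -> R) :
  expect X = expect (fun x : T => expect (fun t : k.-tuple T => X [tuple of x :: t])).
Proof.
have bigS : \big[Rplus/0]_(t : k.+1.-tuple T) X t =
    \big[Rplus/0]_(x : T) \big[Rplus/0]_(t : k.-tuple T) X [tuple of x :: t].
  rewrite pair_bigA /= (reindex (fun p => [tuple of p.1 :: tval p.2])) /=.
    by apply: eq_bigr => -[].
  exists (fun t => (thead t, behead_tuple t)) => [[x t] _|t _].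
    by congr pair; apply: val_inj.
  by apply: val_inj; case: t => -[].
rewrite /expect !card_tuple bigS -big_distrr /= expnS mult_INR Rinv_mult; lra.
Qed.

Section Vec.
Variable d : nat.
Implicit Types u v w x y z : vec d.

Definition sqnorm u := inner u u.

Lemma innerC u v : inner u v = inner v u.
Proof. by apply: eq_bigr => i _; ring. Qed.

Lemma innerDl u v w : inner (vadd u v) w = inner u w + inner v w.
Proof. by rewrite /inner -big_split /=; apply: eq_bigr => i _; rewrite /vadd; ring. Qed.

Lemma innerDr u v w : inner w (vadd u v) = inner w u + inner w v.
Proof. by rewrite innerC innerDl !(innerC w). Qed.

Lemma innerBl u v w : inner (vsub u v) w = inner u w - inner v w.
Proof. by rewrite /inner -big_Rminus; apply: eq_bigr => i _; rewrite /vsub; ring. Qed.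

Lemma innerBr u v w : inner w (vsub u v) = inner w u - inner w v.
Proof. by rewrite innerC innerBl !(innerC w). Qed.

Lemma innerZl a u w : inner (vscale a u) w = a * inner u w.
Proof. by rewrite /inner big_distrr /=; apply: eq_bigr => i _; rewrite /vscale; ring. Qed.

Lemma innerZr a u w : inner w (vscale a u) = a * inner w u.
Proof. by rewrite innerC innerZl innerC. Qed.

Lemma sqnormD u v : sqnorm (vadd u v) = sqnorm u + 2 * inner u v + sqnorm v.
Proof. by rewrite /sqnorm !innerDl !innerDr (innerC v u); ring. Qed.

Lemma sqnormB u v : sqnorm (vsub u v) = sqnorm u - 2 * inner u v + sqnorm v.
Proof. by rewrite /sqnorm !innerBl !innerBr (innerC v u); ring. Qed.

Lemma sqnormZ a u : sqnorm (vscale a u) = a ^ 2 * sqnorm u.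
Proof. by rewrite /sqnorm innerZl innerZr; ring. Qed.

Lemma sqnorm0 : sqnorm (fun _ => 0) = 0.
Proof. by rewrite /sqnorm /inner big1 // => i _; ring. Qed.

Lemma inner_subrr u x : inner u (vsub x x) = 0.
Proof. by rewrite innerBr; ring. Qed.

Lemma sqnorm_subrr x : sqnorm (vsub x x) = 0.
Proof. exact: inner_subrr. Qed.

Lemma sqnorm_ge0 u : 0 <= sqnorm u.
Proof. by apply: big_Rge0 => i _; nra. Qed.

Lemma norm_sqE u : norm u ^ 2 = sqnorm u.
Proof. by rewrite /norm pow2_sqrt //; apply: sqnorm_ge0. Qed.

Lemma normZ a u : norm (vscale a u) = Rabs a * norm u.
Proof.
rewrite /norm -/(sqnorm _) sqnormZ sqrt_mult_alt; last exact: pow2_ge_0.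
by rewrite -sqrt_Rsqr_abs /Rsqr /= Rmult_1_r.
Qed.

Lemma coord_sq_le u k : u k ^ 2 <= sqnorm u.
Proof.
rewrite (_ : u k ^ 2 = u k * u k); last by ring.
rewrite /sqnorm /inner (bigD1 k) //=.
rewrite -[X in X <= _]Rplus_0_r; apply: Rplus_le_compat_l.
by apply: big_Rge0 => i _; nra.
Qed.

Lemma sqnorm_eq0 u : sqnorm u = 0 -> u = (fun _ => 0).
Proof.
move=> u0; apply: functional_extensionality => k.
have : u k ^ 2 = 0 by have := coord_sq_le u k; have := pow2_ge_0 (u k); lra.
by nra.
Qed.

Lemma sqnorm_subr_eq0 u v : sqnorm (vsub u v) = 0 -> u = v.
Proof.
move/sqnorm_eq0 => uv; apply: functional_extensionality => k.
by have := f_equal (fun w => w k) uv; rewrite /vsub; lra.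
Qed.

Lemma sqnormBC u v : sqnorm (vsub u v) = sqnorm (vsub v u).
Proof. by rewrite !sqnormB innerC; ring. Qed.

Lemma inner_le_young u v a : 0 < a ->
  inner u v <= a / 2 * sqnorm u + / (2 * a) * sqnorm v.
Proof.
move=> a0; have := sqnorm_ge0 (vsub (vscale a u) v).
rewrite sqnormB sqnormZ innerZl => sq0.
have : 0 <= / (2 * a) * (a ^ 2 * sqnorm u - 2 * (a * inner u v) + sqnorm v).
  by apply: Rmult_le_pos => //; apply/Rlt_le/Rinv_0_lt_compat; lra.
have -> : / (2 * a) * (a ^ 2 * sqnorm u - 2 * (a * inner u v) + sqnorm v) =
    a / 2 * sqnorm u + / (2 * a) * sqnorm v - inner u v by field; lra.
lra.
Qed.

Lemma sqnormD_le u v a : 0 < a ->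
  sqnorm (vadd u v) <= (1 + a) * sqnorm u + (1 + / a) * sqnorm v.
Proof.
move=> a0; rewrite sqnormD; have := inner_le_young u v a0.
by rewrite Rinv_mult; lra.
Qed.

Lemma sqnormD_le2 u v : sqnorm (vadd u v) <= 2 * sqnorm u + 2 * sqnorm v.
Proof. by have := sqnorm_ge0 (vsub u v); rewrite sqnormB sqnormD; lra. Qed.

Lemma lipschitz_grad_sqnorm (L : R) (g : vec d -> vec d) x y : lipschitz_grad L g ->
  sqnorm (vsub (g x) (g y)) <= L ^ 2 * sqnorm (vsub x y).
Proof.
move=> Lg; rewrite -!norm_sqE -Rpow_mult_distr.
by apply: pow_incr; split; [apply: sqrt_pos | apply: Lg].
Qed.

End Vec.

(** * The descent lemma *)

Section Descent.
Variable d : nat.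
Implicit Types u v x y : vec d.

Lemma derivable_pt_lim_line (f : vec d -> R) g x u t : is_gradient f g ->
  derivable_pt_lim (fun s => f (vadd x (vscale s u))) t
    (inner (g (vadd x (vscale t u))) u).
Proof.
move=> fg eps eps0.
set p := vadd x (vscale t u).
have u0 : 0 <= norm u by apply: sqrt_pos.
have eps'0 : 0 < eps / (2 * (norm u + 1)) by apply: Rdiv_lt_0_compat; lra.
have [del [del0 Hdel]] := fg p _ eps'0.
have del'0 : 0 < del / (norm u + 1) by apply: Rdiv_lt_0_compat; lra.
exists (mkposreal _ del'0) => s s0 /= s_small.
have ps : vsub (vadd x (vscale (t + s) u)) p = vscale s u by rewrite /p; vext.
have s_pos : 0 < Rabs s by apply: Rabs_pos_lt.
have su_small : Rabs s * (norm u + 1) < del.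
  move: s_small => /(Rmult_lt_compat_r (norm u + 1)); rewrite /Rdiv Rmult_assoc Rinv_l; lra.
have := Hdel (vadd x (vscale (t + s) u)).
rewrite ps normZ innerZr => /(_ ltac:(nra)) bound.
have -> : (f (vadd x (vscale (t + s) u)) - f p) / s - inner (g p) u =
    (f (vadd x (vscale (t + s) u)) - f p - s * inner (g p) u) / s by field.
rewrite /Rdiv Rabs_mult Rabs_inv.
apply: (Rle_lt_trans _ (eps / (2 * (norm u + 1)) * norm u)).
  apply: (Rmult_le_reg_r (Rabs s)) => //.
  by rewrite Rmult_assoc Rinv_l; lra.
have : norm u * / (norm u + 1) <= 1.
  by apply: (Rmult_le_reg_r (norm u + 1)); [lra | rewrite Rmult_assoc Rinv_l; lra].
have : 0 <= / (norm u + 1) by apply/Rlt_le/Rinv_0_lt_compat; lra.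
rewrite /Rdiv Rinv_mult; nra.
Qed.

Lemma lipschitz_grad_inner_le (L : R) (g : vec d -> vec d) x y : 0 < L ->
  lipschitz_grad L g -> inner (vsub (g y) (g x)) (vsub y x) <= L * sqnorm (vsub y x).
Proof.
move=> L0 Lg; set w := vsub (g y) (g x); set u := vsub y x.
have young := inner_le_young w u (Rinv_0_lt_compat _ L0).
have : / L / 2 * sqnorm w <= / L / 2 * (L ^ 2 * sqnorm u).
  apply: Rmult_le_compat_l; last exact: lipschitz_grad_sqnorm.
  by have := Rinv_0_lt_compat _ L0; lra.
have -> : / L / 2 * (L ^ 2 * sqnorm u) = L / 2 * sqnorm u by field; lra.
have e : / (2 * / L) = L / 2 by field; lra.
by rewrite e in young; lra.
Qed.

Lemma smooth_upper_bound (f : vec d -> R) g L x y :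
  0 < L -> is_gradient f g -> lipschitz_grad L g ->
  f y <= f x + inner (g x) (vsub y x) + L / 2 * sqnorm (vsub y x).
Proof.
move=> L0 fg Lg.
set u := vsub y x; set a := inner (g x) u; set N := sqnorm u.
(* mean value theorem for f along the segment, minus the claimed quadratic bound *)
pose phi s := f (vadd x (vscale s u)) - (s * a + L / 2 * N * (s * s)).
have dphi t : derivable_pt_lim phi t
    (inner (g (vadd x (vscale t u))) u - (a + L / 2 * N * (t + t))).
  apply: derivable_pt_lim_minus; first exact: derivable_pt_lim_line.
  have := derivable_pt_lim_plus _ _ t _ _
    (derivable_pt_lim_scal id a t 1 (derivable_pt_lim_id t))
    (derivable_pt_lim_scal _ (L / 2 * N) t _
       (derivable_pt_lim_mult id id t 1 1 (derivable_pt_lim_id t) (derivable_pt_lim_id t))).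
  rewrite /plus_fct /mult_real_fct /mult_fct /id.
  have -> : a * 1 + L / 2 * N * (1 * t + t * 1) = a + L / 2 * N * (t + t) by ring.
  by apply: derivable_pt_lim_ext => s; ring.
have [c [phi10 [c0 _]]] := MVT_cor1 phi 0 1 (fun t => exist _ _ (dphi t)) Rlt_0_1.
rewrite /= in phi10.
have dphi_le0 : inner (g (vadd x (vscale c u))) u - (a + L / 2 * N * (c + c)) <= 0.
  have := lipschitz_grad_inner_le x (vadd x (vscale c u)) L0 Lg.
  have -> : vsub (vadd x (vscale c u)) x = vscale c u by vext.
  rewrite innerZr sqnormZ innerBl -/a -/N => H.
  have : inner (g (vadd x (vscale c u))) u - a <= L * c * N.
    by apply: (Rmult_le_reg_l c) => //; nra.
  lra.
have e1 : vadd x (vscale 1 u) = y by rewrite /u; vext.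
have e0 : vadd x (vscale 0 u) = x by vext.
by move: phi10; rewrite /phi e1 e0; nra.
Qed.

End Descent.

(** * Banach's fixed point theorem in [vec d] *)

Lemma geometric_eventually_lt C q eps : 0 <= q < 1 -> 0 < eps ->
  exists N, forall k, (N <= k)%N -> C * q ^ k < eps.
Proof.
move=> q01 eps0; have C1 : 0 < Rabs C + 1 by have := Rabs_pos C; lra.
have [N qN] := pow_lt_1_zero q ltac:(rewrite Rabs_pos_eq; lra) (eps / (Rabs C + 1))
  ltac:(exact: Rdiv_lt_0_compat).
exists N => k /leP /qN; rewrite Rabs_pos_eq; last by apply: pow_le; lra.
move=> /(Rmult_lt_compat_l _ _ _ C1); rewrite (_ : _ * (eps / _) = eps); last by field; lra.
have := pow_le q k ltac:(lra); have := Rle_abs C; nra.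
Qed.

Lemma le0_of_geometric_bound a C q : 0 <= q < 1 -> (forall k, a <= C * q ^ k) -> a <= 0.
Proof.
move=> q01 aC; case: (Rle_lt_dec a 0) => // a0.
have [N CN] := geometric_eventually_lt C q01 a0.
by have := CN N (leqnn N); have := aC N; lra.
Qed.

Lemma sqnorm_le_coord d (u : vec d) B : (forall i, Rabs (u i) <= B) ->
  sqnorm u <= INR d * B ^ 2.
Proof.
move=> uB; rewrite -[d in INR d]card_ord -big_Rconst_card.
apply: big_Rle => i _; have := uB i; have := Rabs_pos (u i).
by rewrite (_ : u i * u i = Rabs (u i) ^ 2); [nra | rewrite pow2_abs; ring].
Qed.

Section Contraction.
Variables (d : nat) (Y : nat -> vec d) (q E : R).
Hypotheses (q01 : 0 <= q < 1) (E0 : 0 <= E).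
Hypothesis Y_step : forall k i, Rabs (Y k.+1 i - Y k i) <= E * q ^ k.

Lemma geometric_partial_bound k j i :
  Rabs (Y (k + j)%N i - Y k i) <= E * q ^ k * (1 - q ^ j) / (1 - q).
Proof.
elim: j => [|j IH].
  by rewrite addn0 Rminus_diag Rabs_R0 /= Rminus_diag /Rdiv !Rmult_0_r Rmult_0_l; lra.
rewrite addnS.
have := Rabs_triang (Y (k + j).+1 i - Y (k + j)%N i) (Y (k + j)%N i - Y k i).
rewrite (_ : _ + (_ - _) = Y (k + j).+1 i - Y k i); last by ring.
have := Y_step (k + j) i; rewrite pow_add.
have -> : E * q ^ k * (1 - q ^ j.+1) / (1 - q) =
    E * q ^ k * (1 - q ^ j) / (1 - q) + E * (q ^ k * q ^ j) by rewrite /=; field; lra.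
lra.
Qed.

Lemma geometric_tail_bound k m i : (k <= m)%N -> Rabs (Y m i - Y k i) <= E * q ^ k / (1 - q).
Proof.
move/subnKC <-; apply: (Rle_trans _ _ _ (geometric_partial_bound _ _ _)).
have : 0 <= q ^ (m - k) by apply: pow_le; lra.
have : 0 <= E * q ^ k by apply: Rmult_le_pos => //; apply: pow_le; lra.
move=> ? ?; rewrite /Rdiv; apply: Rmult_le_compat_r; first by apply/Rlt_le/Rinv_0_lt_compat; lra.
nra.
Qed.

Lemma geometric_limit : exists l, forall k i, Rabs (Y k i - l i) <= E * q ^ k / (1 - q).
Proof.
have cauchy i : Cauchy_crit (fun k => Y k i).
  move=> eps eps0.
  have [N CN] := geometric_eventually_lt (E / (1 - q)) (eps := eps / 2) q01 ltac:(lra).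
  exists N => m p /leP mN /leP pN; rewrite /Rdist.
  have := Rabs_triang (Y m i - Y N i) (Y N i - Y p i).
  rewrite (_ : _ + (_ - _) = Y m i - Y p i) ?(Rabs_minus_sym (Y N i)); last by ring.
  have := geometric_tail_bound i mN; have := geometric_tail_bound i pN; have := CN N (leqnn N).
  by rewrite (_ : E / (1 - q) * q ^ N = E * q ^ N / (1 - q)); [lra | field; lra].
exists (fun i => proj1_sig (R_complete _ (cauchy i))) => k i.
case: (R_complete _ (cauchy i)) => /= l Yl.
case: (Rle_lt_dec (Rabs (Y k i - l)) (E * q ^ k / (1 - q))) => // far.
have [N YN] := Yl _ (Rgt_minus _ _ far).
have := YN (maxn N k) ltac:(apply/leP; exact: leq_maxl).
have := geometric_tail_bound i (leq_maxr N k); rewrite /Rdist => tail near.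
have := Rabs_triang (Y k i - Y (maxn N k) i) (Y (maxn N k) i - l).
rewrite (_ : _ + (_ - _) = Y k i - l); last by ring.
by rewrite Rabs_minus_sym in tail; lra.
Qed.

End Contraction.

Lemma contraction_fixpoint d (G : vec d -> vec d) q : 0 <= q < 1 ->
  (forall a b, sqnorm (vsub (G a) (G b)) <= q ^ 2 * sqnorm (vsub a b)) -> exists l, G l = l.
Proof.
move=> q01 HG.
pose Y k := iter k G (fun _ => 0).
set E := sqrt (sqnorm (vsub (Y 1%N) (Y 0%N))).
have E0 : 0 <= E by apply: sqrt_pos.
have q2_01 : 0 <= q ^ 2 < 1 by split; nra.
have step_sq k : sqnorm (vsub (Y k.+1) (Y k)) <= E ^ 2 * (q ^ 2) ^ k.
  elim: k => [|k IH]; first by rewrite /E pow2_sqrt ?Rmult_1_r; [lra | apply: sqnorm_ge0].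
  apply: (Rle_trans _ _ _ (HG (Y k.+1) (Y k))).
  by rewrite (_ : (q ^ 2) ^ k.+1 = q ^ 2 * (q ^ 2) ^ k) //; have := pow2_ge_0 q; nra.
have step k i : Rabs (Y k.+1 i - Y k i) <= E * q ^ k.
  have := coord_sq_le (vsub (Y k.+1) (Y k)) i; have := step_sq k.
  rewrite -pow_mult Nat.mul_comm pow_mult -Rpow_mult_distr /vsub => ? ?.
  have : 0 <= E * q ^ k by apply: Rmult_le_pos => //; apply: pow_le; lra.
  by move=> ?; apply: Rabs_le; split; nra.
have [l Yl] := geometric_limit q01 E0 step.
set F := E / (1 - q).
have near k : sqnorm (vsub (Y k) l) <= INR d * F ^ 2 * (q ^ 2) ^ k.
  apply: (Rle_trans _ _ _ (sqnorm_le_coord (B := E * q ^ k / (1 - q)) _)) => [i|].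
    exact: Yl.
  by right; rewrite /F -pow_mult Nat.mul_comm pow_mult; field; lra.
exists l; apply/sqnorm_subr_eq0/Rle_antisym/sqnorm_ge0.
apply: (le0_of_geometric_bound (C := 4 * (INR d * F ^ 2)) q2_01) => k.
have -> : vsub (G l) l = vadd (vsub (G l) (G (Y k))) (vsub (Y k.+1) l).
  by change (Y k.+1) with (G (Y k)); vext.
apply: (Rle_trans _ _ _ (sqnormD_le2 _ _)).
have := HG l (Y k); rewrite (sqnormBC l) => HGk.
have := near k.+1; rewrite (_ : (q ^ 2) ^ k.+1 = q ^ 2 * (q ^ 2) ^ k) // => nearS.
have := near k; set B := INR d * F ^ 2 * (q ^ 2) ^ k => neark.
have B0 : 0 <= B by apply: Rmult_le_pos; [have := pos_INR d; nra | apply: pow_le; lra].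
have : q ^ 2 * sqnorm (vsub (Y k) l) <= 1 * B.
  by apply: Rmult_le_compat; [lra | apply: sqnorm_ge0 | lra | lra].
have : INR d * F ^ 2 * (q ^ 2 * (q ^ 2) ^ k) <= 1 * B.
  by rewrite (_ : INR d * F ^ 2 * (q ^ 2 * (q ^ 2) ^ k) = q ^ 2 * B); [nra | rewrite /B; ring].
by rewrite (_ : 4 * (INR d * F ^ 2) * (q ^ 2) ^ k = 4 * B); [lra | rewrite /B; ring].
Qed.

(** * Proximal operators of a convex function *)

Definition convex_on d (dom : vec d -> Prop) (h : vec d -> R) :=
  forall x y t, dom x -> dom y -> 0 <= t <= 1 ->
    dom (vadd (vscale t x) (vscale (1 - t) y)) /\
    h (vadd (vscale t x) (vscale (1 - t) y)) <= t * h x + (1 - t) * h y.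

Lemma Rle_of_forall_le_add A B C : 0 <= C ->
  (forall s, 0 < s <= 1 -> A <= B + s * C) -> A <= B.
Proof.
move=> C0 AB; case: (Rle_lt_dec A B) => // BA.
pose s := (A - B) / ((A - B) + C + 1).
have s0 : 0 < s by apply: Rdiv_lt_0_compat; lra.
have sE : s * ((A - B) + C + 1) = A - B by rewrite /s; field; lra.
by have := AB s; nra.
Qed.

Section Prox.
Variables (d : nat) (dom : vec d -> Prop) (h : vec d -> R).
Hypothesis h_convex : convex_on dom h.
Implicit Types x y z : vec d.

Lemma min_variational_ineq c P z : 0 < c -> dom P ->
  (forall y, dom y -> h P + c * sqnorm (vsub P z) <= h y + c * sqnorm (vsub y z)) ->
  forall y, dom y -> h P <= h y + 2 * c * inner (vsub P z) (vsub y P).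
Proof.
move=> c0 domP Pmin y domy.
apply: (Rle_of_forall_le_add (C := c * sqnorm (vsub y P))).
  by have := sqnorm_ge0 (vsub y P); nra.
move=> s s01; have [doms hs] := h_convex domy domP (t := s) ltac:(lra).
have := Pmin _ doms.
have -> : vsub (vadd (vscale s y) (vscale (1 - s) P)) z =
    vadd (vsub P z) (vscale s (vsub y P)) by vext.
rewrite sqnormD sqnormZ innerZr => Pmin_s.
apply: (Rmult_le_reg_l s); first lra.
by nra.
Qed.

Lemma prox_variational_ineq g p z y : 0 < g -> is_prox dom h g p -> dom y ->
  h (p z) <= h y + / g * inner (vsub (p z) z) (vsub y (p z)).
Proof.
move=> g0 gp domy; have [domp pmin] := gp z.
have := @min_variational_ineq (/ (2 * g)) _ z ltac:(apply: Rinv_0_lt_compat; lra) domp.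
rewrite (_ : 2 * / (2 * g) = / g); last by field; lra.
by apply => // w /pmin; rewrite !norm_sqE.
Qed.

Lemma prox_nonexpansive g p z1 z2 : 0 < g -> is_prox dom h g p ->
  sqnorm (vsub (p z1) (p z2)) <= sqnorm (vsub z1 z2).
Proof.
move=> g0 gp.
have vi1 := prox_variational_ineq z1 g0 gp (proj1 (gp z2)).
have vi2 := prox_variational_ineq z2 g0 gp (proj1 (gp z1)).
set P1 := p z1 in vi1 vi2 *; set P2 := p z2 in vi1 vi2 *.
have e : inner (vsub P1 z1) (vsub P2 P1) + inner (vsub P2 z2) (vsub P1 P2) =
    - sqnorm (vsub P1 P2) + inner (vsub z1 z2) (vsub P1 P2).
  rewrite /sqnorm /inner -!big_split -big_Ropp -big_split /=.
  by apply: eq_bigr => i _; rewrite /vsub; ring.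
have : 0 <= inner (vsub P1 z1) (vsub P2 P1) + inner (vsub P2 z2) (vsub P1 P2).
  apply: (Rmult_le_reg_l (/ g)); first exact: Rinv_0_lt_compat.
  by lra.
have := inner_le_young (vsub z1 z2) (vsub P1 P2) Rlt_0_1.
by rewrite e Rmult_1_r; lra.
Qed.

(* With r = eta / gam in (0, 2), the prox of step gam at z is the fixed point of
   y |-> p (r z + (1 - r) y), a contraction of ratio |1 - r|. *)
Lemma prox_exists_step eta gam p : 0 < eta -> is_prox dom h eta p -> eta / 2 < gam ->
  exists p', is_prox dom h gam p'.
Proof.
move=> eta0 etap gam_gt; have gam0 : 0 < gam by lra.
set r := eta / gam.
have r02 : 0 < r < 2.
  split; first exact: Rdiv_lt_0_compat.
  by apply: (Rmult_lt_reg_r gam) => //; rewrite /r /Rdiv Rmult_assoc Rinv_l; lra.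
suff prox_at z : exists y, dom y /\ forall w, dom w ->
    h y + / (2 * gam) * norm (vsub y z) ^ 2 <= h w + / (2 * gam) * norm (vsub w z) ^ 2.
  exists (fun z => proj1_sig (constructive_indefinite_description _ (prox_at z))).
  by move=> z; exact: (proj2_sig (constructive_indefinite_description _ (prox_at z))).
pose G y := p (vadd (vscale r z) (vscale (1 - r) y)).
have [y Gy] : exists y, G y = y.
  apply: (@contraction_fixpoint d G (Rabs (1 - r))).
    by split; [exact: Rabs_pos | apply: Rabs_def1; lra].
  move=> a b; apply: (Rle_trans _ _ _ (prox_nonexpansive _ _ eta0 etap)).
  have -> : vsub (vadd (vscale r z) (vscale (1 - r) a)) (vadd (vscale r z) (vscale (1 - r) b))
      = vscale (1 - r) (vsub a b) by vext.
  by rewrite sqnormZ -pow2_abs; lra.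
exists y; split; first by rewrite -Gy; exact: (proj1 (etap _)).
move=> w domw; rewrite !norm_sqE.
have := prox_variational_ineq (vadd (vscale r z) (vscale (1 - r) y)) eta0 etap domw.
rewrite -/(G y) Gy.
have -> : vsub y (vadd (vscale r z) (vscale (1 - r) y)) = vscale r (vsub y z) by vext.
rewrite innerZl.
have -> : vsub w z = vadd (vsub w y) (vsub y z) by vext.
rewrite sqnormD.
have -> : / eta * (r * inner (vsub y z) (vsub w y)) = / gam * inner (vsub w y) (vsub y z).
  by rewrite innerC /r; field; lra.
have -> : / (2 * gam) * (sqnorm (vsub w y) + 2 * inner (vsub w y) (vsub y z) + sqnorm (vsub y z))
    = / (2 * gam) * sqnorm (vsub w y) + / gam * inner (vsub w y) (vsub y z)
      + / (2 * gam) * sqnorm (vsub y z) by field; lra.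
have : 0 < / (2 * gam) by apply: Rinv_0_lt_compat; lra.
by have := sqnorm_ge0 (vsub w y); nra.
Qed.

Lemma prox_exists eta p : 0 < eta -> is_prox dom h eta p ->
  forall gam, 0 < gam -> exists p', is_prox dom h gam p'.
Proof.
move=> eta0 etap.
have small k : exists p', is_prox dom h (eta * (3 / 4) ^ k) p'.
  elim: k => [|k [p' IH]]; first by exists p; rewrite /= Rmult_1_r.
  apply: (prox_exists_step _ IH); first by apply: Rmult_lt_0_compat => //; apply: pow_lt; lra.
  by rewrite /=; have := pow_lt (3 / 4) k ltac:(lra); nra.
move=> gam gam0.
have [N etaN] := geometric_eventually_lt eta (q := 3 / 4) (eps := 2 * gam)
  ltac:(split; lra) ltac:(lra).
have [p' IH] := small N.
apply: (prox_exists_step _ IH); last by have := etaN N (leqnn N); lra.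
by apply: Rmult_lt_0_compat => //; apply: pow_lt; lra.
Qed.

(* The bracket in the definition of D_h(x, alpha), with the gradient replaced by gv. *)
Definition qmodel (gv x : vec d) (alpha : R) (y : vec d) :=
  inner gv (vsub y x) + alpha / 2 * sqnorm (vsub y x) + h y - h x.

Lemma prox_minimizes_qmodel gam p gv x : 0 < gam -> is_prox dom h gam p ->
  let y := p (vsub x (vscale gam gv)) in
  dom y /\ forall w, dom w -> qmodel gv x (/ gam) y <= qmodel gv x (/ gam) w.
Proof.
move=> gam0 gamp y; have [domy ymin] := gamp (vsub x (vscale gam gv)).
split => // w /ymin; rewrite !norm_sqE -/y /qmodel.
have shift u : sqnorm (vsub u (vsub x (vscale gam gv))) =
    sqnorm (vsub u x) + 2 * gam * inner gv (vsub u x) + gam ^ 2 * sqnorm gv.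
  have -> : vsub u (vsub x (vscale gam gv)) = vadd (vsub u x) (vscale gam gv) by vext.
  by rewrite sqnormD sqnormZ innerZr innerC; ring.
rewrite !shift.
have e A B : / (2 * gam) * (A + 2 * gam * B + gam ^ 2 * sqnorm gv) =
    / gam / 2 * A + B + gam / 2 * sqnorm gv by field; lra.
by rewrite !e; lra.
Qed.

Lemma qmodel_minimizer eta p alpha gv x : 0 < eta -> is_prox dom h eta p -> 0 < alpha ->
  exists y, dom y /\ forall w, dom w -> qmodel gv x alpha y <= qmodel gv x alpha w.
Proof.
move=> eta0 etap alpha0.
have [p' alphap] := prox_exists eta0 etap (Rinv_0_lt_compat _ alpha0).
have := prox_minimizes_qmodel gv x (Rinv_0_lt_compat _ alpha0) alphap.
by rewrite Rinv_inv => -[domy ymin]; exists (p' (vsub x (vscale (/ alpha) gv))).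
Qed.

End Prox.

(** * One proximal step under the PL condition *)

Lemma inner_gavg n d (gs : 'I_n -> vec d -> vec d) x u :
  inner (gavg gs x) u = / INR n * \big[Rplus/0]_(i < n) inner (gs i x) u.
Proof.
rewrite {1}/inner /gavg.
under eq_bigr => k _ do rewrite Rmult_assoc big_distrl /=.
by rewrite -big_distrr /= exchange_big.
Qed.

Section ProxStep.
Variables (n d : nat) (L mu eta : R) (fs : 'I_n -> vec d -> R) (gs : 'I_n -> vec d -> vec d).
Variables (dom : vec d -> Prop) (h : vec d -> R) (xstar : vec d) (prox : vec d -> vec d).
Hypotheses (n_gt0 : (0 < n)%N) (L_gt0 : 0 < L) (mu_gt0 : 0 < mu) (eta_gt0 : 0 < eta).
Hypothesis fs_grad : forall i, is_gradient (fs i) (gs i).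
Hypothesis gs_lip : forall i, lipschitz_grad L (gs i).
Hypothesis h_convex : convex_on dom h.
Hypothesis xstar_min : forall y, dom y -> favg fs xstar + h xstar <= favg fs y + h y.
Hypothesis F_PL : is_PL fs gs dom h (favg fs xstar + h xstar) mu.
Hypothesis eta_prox : is_prox dom h eta prox.
Hypothesis etaL_lt1 : eta * L < 1.
Implicit Types x y : vec d.

Definition gap x := favg fs x + h x - (favg fs xstar + h xstar).

Lemma gap_ge0 x : dom x -> 0 <= gap x.
Proof. by move/xstar_min; rewrite /gap; lra. Qed.

Lemma favg_upper_bound x y :
  favg fs y <= favg fs x + inner (gavg gs x) (vsub y x) + L / 2 * sqnorm (vsub y x).
Proof.
have n0 : 0 < INR n by apply/lt_0_INR/ltP.
have sum_le : \big[Rplus/0]_(i < n) fs i y <= \big[Rplus/0]_(i < n)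
    (fs i x + inner (gs i x) (vsub y x) + L / 2 * sqnorm (vsub y x)).
  by apply: big_Rle => i _; exact: smooth_upper_bound.
rewrite !big_split /= big_Rconst_card card_ord in sum_le.
rewrite /favg inner_gavg.
apply: (Rle_trans _ _ _ (Rmult_le_compat_l _ _ _ (Rlt_le _ _ (Rinv_0_lt_compat _ n0)) sum_le)).
by right; rewrite !Rmult_plus_distr_l; congr (_ + _); field; lra.
Qed.

Lemma PL_qmodel x : dom x -> exists y, dom y /\
  (forall w, dom w -> qmodel h (gavg gs x) x mu y <= qmodel h (gavg gs x) x mu w) /\
  qmodel h (gavg gs x) x mu y <= - gap x.
Proof.
move=> domx.
have [y [domy ymin]] := qmodel_minimizer h_convex (gavg gs x) x eta_gt0 eta_prox mu_gt0.
exists y; do 2!split => //.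
suff : mu * gap x <= / 2 * (-2 * mu * qmodel h (gavg gs x) x mu y) by nra.
apply: (F_PL domx); exists (qmodel h (gavg gs x) x mu y); split => //; split.
  by exists y; split => //; rewrite /qmodel norm_sqE.
by move=> w /ymin; rewrite /qmodel norm_sqE.
Qed.

Lemma gap_eq0_of_lt_PL x : L < mu -> dom x -> gap x = 0.
Proof.
move=> L_lt_mu domx; have [y [domy [_ PLy]]] := PL_qmodel domx.
have up := favg_upper_bound x y; have gy := gap_ge0 domy; have gx := gap_ge0 domx.
have N0 := sqnorm_ge0 (vsub y x).
rewrite /qmodel /gap in PLy gy gx.
have /sqnorm_subr_eq0 yx : sqnorm (vsub y x) = 0 by nra.
by rewrite yx inner_subrr sqnorm_subrr in PLy; rewrite /gap; lra.
Qed.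

Lemma prox_grad_qmodel_le x : dom x ->
  qmodel h (gavg gs x) x (/ eta) (prox (vsub x (vscale eta (gavg gs x))))
    <= - (mu * eta) * gap x.
Proof.
move=> domx; set gx := gavg gs x.
have [_ pmin] := prox_minimizes_qmodel gx x eta_gt0 eta_prox.
case: (Rle_lt_dec (mu * eta) 1) => [s_le1 | s_gt1].
  have [y [domy [_ PLy]]] := PL_qmodel domx.
  set s := mu * eta in s_le1 *; have s0 : 0 < s by apply: Rmult_lt_0_compat.
  have [doms hs] := h_convex domy domx (t := s) ltac:(lra).
  apply: (Rle_trans _ _ _ (pmin _ doms)); move: PLy; rewrite /qmodel -/gx.
  have -> : vsub (vadd (vscale s y) (vscale (1 - s) x)) x = vscale s (vsub y x) by vext.
  rewrite sqnormZ innerZr.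
  have -> : / eta / 2 * (s ^ 2 * sqnorm (vsub y x)) = s * (mu / 2 * sqnorm (vsub y x)).
    by rewrite /s; field; lra.
  by nra.
(* mu eta > 1 forces L < mu, and then PL makes F constant on dom *)
have -> : gap x = 0 by apply: gap_eq0_of_lt_PL => //; nra.
apply: (Rle_trans _ _ _ (pmin _ domx)).
by rewrite /qmodel inner_subrr sqnorm_subrr; lra.
Qed.

(* Compare the inexact step x' with the exact prox-gradient point xb: the descent
   lemma at x', the variational inequality of x' tested at xb, and Young's
   inequality for the gradient error. *)
Lemma prox_step_gap_le x v : dom x ->
  let x' := prox (vsub x (vscale eta v)) in
  gap x' <= (1 - mu * eta) * gap x + eta / 2 * sqnorm (vsub (gavg gs x) v)
            - (/ (2 * eta) - L / 2) * sqnorm (vsub x' x).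
Proof.
move=> domx x'; set gx := gavg gs x; set xb := prox (vsub x (vscale eta gx)).
have model := prox_grad_qmodel_le domx; rewrite -/gx -/xb /qmodel /gap in model.
have vi := prox_variational_ineq h_convex (vsub x (vscale eta v)) eta_gt0 eta_prox
  (proj1 (eta_prox (vsub x (vscale eta gx)))).
rewrite -/x' -/xb in vi.
have up := favg_upper_bound x x'; rewrite -/gx in up.
have young := inner_le_young (vsub gx v) (vsub x' xb) eta_gt0.
have e : inner gx (vsub x' x) - inner gx (vsub xb x)
    + / eta * inner (vsub x' (vsub x (vscale eta v))) (vsub xb x') - / eta / 2 * sqnorm (vsub xb x)
    = inner (vsub gx v) (vsub x' xb) - / (2 * eta) * sqnorm (vsub x' x)
      - / (2 * eta) * sqnorm (vsub x' xb).
  rewrite /sqnorm /inner !big_distrr -!big_Rminus -!big_split -?big_Rminus /=.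
  by apply: eq_bigr => k _; rewrite /vsub /vscale; field; lra.
by rewrite /gap; lra.
Qed.

End ProxStep.

(** * Sampling with replacement *)

Section SampleSum.
Variables (n d : nat) (zeta : 'I_n -> vec d).
Hypothesis n_gt0 : (0 < n)%N.
Hypothesis zeta_mean0 : forall k, \big[Rplus/0]_(i < n) zeta i k = 0.

Definition tuple_sum m (t : m.-tuple 'I_n) : vec d :=
  fun k => \big[Rplus/0]_(i <- t) zeta i k.

(* The samples are independent and centred, so the cross terms vanish. *)
Lemma expect_sqnorm_tuple_sum m :
  expect (fun t : m.-tuple 'I_n => sqnorm (tuple_sum t)) =
  INR m * (/ INR n * \big[Rplus/0]_(i < n) sqnorm (zeta i)).
Proof.
have i0 : 'I_n := Ordinal n_gt0.
elim: m => [|m IH].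
  rewrite expect_tuple0 (_ : tuple_sum [tuple] = fun _ => 0) ?sqnorm0 /=; first ring.
  by apply: functional_extensionality => k; rewrite /tuple_sum big_nil.
rewrite expect_tupleS.
have cons x (t : m.-tuple 'I_n) : tuple_sum [tuple of x :: t] = vadd (zeta x) (tuple_sum t).
  by apply: functional_extensionality => k; rewrite /tuple_sum /vadd big_cons.
under eq_expect => x do under eq_expect => t do rewrite cons sqnormD.
under eq_expect => x do rewrite !expectD IH (expect_cst (nseq_tuple m i0)).
rewrite !expectD (expect_cst i0).
have -> : expect (fun x => expect (fun t : m.-tuple 'I_n => 2 * inner (zeta x) (tuple_sum t))) = 0.
  under eq_expect => x do rewrite expectZ /inner expect_sum.
  under eq_expect => x do under eq_bigr => k _ do rewrite expectZ.
  rewrite expectZ expect_sum big1 ?Rmult_0_r // => k _.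
  under eq_expect => x do rewrite Rmult_comm.
  by rewrite expectZ expect_ordE zeta_mean0; ring.
by rewrite expect_ordE S_INR; ring.
Qed.

End SampleSum.

Lemma expect_notin_tuple n (j : 'I_n) b :
  expect (fun t : b.-tuple 'I_n => if j \in tval t then 0 else 1) = (1 - / INR n) ^ b.
Proof.
have n0 : 0 < INR n by apply/lt_0_INR/ltP; exact: leq_ltn_trans (leq0n j) (ltn_ord j).
elim: b => [|b IH]; first by rewrite expect_tuple0.
rewrite expect_tupleS.
have cons x (t : b.-tuple 'I_n) : (if j \in tval [tuple of x :: t] then 0 else 1) =
    (if j \in tval t then 0 else 1) * (if j == x then 0 else 1).
  by rewrite /= in_cons; case: (j == x); case: (j \in tval t) => /=; ring.
under eq_expect => x do under eq_expect => t do rewrite cons.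
under eq_expect => x do rewrite (eq_expect (fun t => Rmult_comm _ _)) expectZ IH Rmult_comm.
rewrite expectZ expect_ordE (bigD1 j) //= eqxx.
rewrite (eq_bigr (fun _ => 1)) => [|i /negbTE]; last by rewrite eq_sym => ->.
have sum1 : 1 + \big[Rplus/0]_(i < n | i != j) 1 = INR n.
  by have := big_Rconst_card 'I_n 1; rewrite card_ord (bigD1 j) //= Rmult_1_r.
rewrite (_ : \big[Rplus/0]_(i < n | i != j) 1 = INR n - 1); last by lra.
by rewrite /=; field; lra.
Qed.

Lemma big_sq_centered_le n (c : 'I_n -> R) : (0 < n)%N ->
  let m := / INR n * \big[Rplus/0]_(j < n) c j in
  \big[Rplus/0]_(i < n) ((c i - m) * (c i - m)) <= \big[Rplus/0]_(i < n) (c i * c i).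
Proof.
move=> n_gt0 m; have n0 : 0 < INR n by apply/lt_0_INR/ltP.
have -> : \big[Rplus/0]_(i < n) ((c i - m) * (c i - m)) =
    \big[Rplus/0]_(i < n) (c i * c i) - 2 * m * \big[Rplus/0]_(i < n) c i + INR n * m ^ 2.
  rewrite big_distrr -[n in INR n]card_ord -big_Rconst_card -big_Rminus -big_split /=.
  by apply: eq_bigr => i _; ring.
have -> : \big[Rplus/0]_(i < n) c i = INR n * m by rewrite /m; field; lra.
by have := pow2_ge_0 m; nra.
Qed.

Lemma Bernoulli_pow_le1 x m : 0 <= x <= 1 -> (1 - x) ^ m * (1 + INR m * x) <= 1.
Proof.
move=> x01; elim: m => [|m IH]; first by rewrite /=; lra.
have p0 : 0 <= (1 - x) ^ m by apply: pow_le; lra.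
have : (1 - x) * (1 + (INR m + 1) * x) <= 1 + INR m * x by have := pos_INR m; nra.
rewrite S_INR /= => step.
apply: (Rle_trans _ ((1 - x) ^ m * (1 + INR m * x))) => //.
rewrite (_ : _ * _ * _ = (1 - x) ^ m * ((1 - x) * (1 + (INR m + 1) * x))); last by ring.
exact: Rmult_le_compat_l.
Qed.

(** * The step-size conditions *)

Lemma saga_variance_balance N B L eta q :
  0 < B <= N -> 0 < L -> 0 < eta -> 0 <= q -> q * (1 + B / N) <= 1 ->
  let c := 2 * eta * L ^ 2 * N / B ^ 2 in
  eta / 2 * (L ^ 2 / B) + c * q * (1 + / (2 * N / B)) <= c.
Proof.
move=> B0N L_gt0 eta_gt0 q_ge0 q_le c; have := q_le; set s := B / N => qs.
have s01 : 0 < s <= 1.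
  split; first by apply: Rdiv_lt_0_compat; lra.
  by apply: (Rmult_le_reg_r N); [lra | rewrite /s /Rdiv Rmult_assoc Rinv_l; lra].
have c0 : 0 < c.
  rewrite /c; apply: Rdiv_lt_0_compat; last by apply: pow_lt; lra.
  by apply: Rmult_lt_0_compat; [apply: Rmult_lt_0_compat; [| apply: pow_lt] |]; lra.
rewrite (_ : / (2 * N / B) = s / 2); last by rewrite /s; field; lra.
rewrite (_ : eta / 2 * (L ^ 2 / B) = c * s / 4); last by rewrite /c /s; field; lra.
(* q (1 + s/2) <= (1 + s/2) / (1 + s) <= 1 - s/4 *)
have : q * (1 + s / 2) * (1 + s) <= 1 + s / 2.
  by rewrite (_ : q * (1 + s / 2) * (1 + s) = q * (1 + s) * (1 + s / 2)); [nra | ring].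
have : (1 - s / 4) * (1 + s) >= 1 + s / 2 by nra.
move=> ? ?; have : q * (1 + s / 2) <= 1 - s / 4 by nra.
by nra.
Qed.

Lemma saga_distance_balance N B rho L eta q :
  1 <= B <= N -> 0 < rho <= 1 / 5 -> 16 * N ^ 2 * rho ^ 2 / B ^ 3 + rho <= 1 ->
  0 < L -> eta = rho / L -> 0 <= q -> q * (1 + B / N) <= 1 ->
  let c := 2 * eta * L ^ 2 * N / B ^ 2 in
  c * (1 + q * (2 * N / B)) <= / (2 * eta) - L / 2.
Proof.
move=> BN rho01 rho_cond L_gt0 eta_def q_ge0 q_le c.
have eta_gt0 : 0 < eta by rewrite eta_def; apply: Rdiv_lt_0_compat; lra.
set beta := 2 * N / B.
have beta0 : 0 < beta by apply: Rdiv_lt_0_compat; lra.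
have q_le1 : q <= 1.
  have : 0 <= q * (B / N) by apply: Rmult_le_pos => //; apply/Rlt_le/Rdiv_lt_0_compat; lra.
  by lra.
have c0 : 0 <= c.
  rewrite /c; apply: Rmult_le_pos; last by apply/Rlt_le/Rinv_0_lt_compat/pow_lt; lra.
  by apply: Rmult_le_pos; [apply: Rmult_le_pos; [| apply: pow_le] |]; lra.
apply: (Rle_trans _ (c * (3 * N / B))).
  apply: Rmult_le_compat_l => //.
  suff : 1 + beta <= 3 * N / B.
    by have := Rmult_le_compat_r _ _ _ (Rlt_le _ _ beta0) q_le1; lra.
  rewrite /beta; apply: (Rmult_le_reg_r B); first lra.
  rewrite (_ : (1 + 2 * N / B) * B = B + 2 * N); last by field; lra.
  by rewrite (_ : 3 * N / B * B = 3 * N); [lra | field; lra].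
rewrite (_ : c * (3 * N / B) = L * (16 * N ^ 2 * rho ^ 2 / B ^ 3 * (3 / (8 * rho))));
  last by rewrite /c eta_def; field; lra.
rewrite (_ : / (2 * eta) - L / 2 = L * (/ (2 * rho) - 1 / 2)); last by rewrite eta_def; field; lra.
apply: Rmult_le_compat_l; first lra.
apply: (Rle_trans _ ((1 - rho) * (3 / (8 * rho)))).
  by apply: Rmult_le_compat_r; [apply/Rlt_le/Rdiv_lt_0_compat | ]; lra.
rewrite (_ : (1 - rho) * (3 / (8 * rho)) = 3 / 8 * / rho - 3 / 8); last by field; lra.
rewrite (_ : / (2 * rho) - 1 / 2 = 4 / 8 * / rho - 1 / 2); last by field; lra.
have : 5 <= / rho.
  by rewrite -(Rinv_inv 5); apply: Rinv_le_contravar; lra.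
lra.
Qed.


Definition vmean n d (a : 'I_n -> vec d) : vec d :=
  fun k => / INR n * \big[Rplus/0]_(i < n) a i k.

Lemma vmean_centered n d (a : 'I_n -> vec d) k : (0 < n)%N ->
  \big[Rplus/0]_(i < n) vsub (a i) (vmean a) k = 0.
Proof.
move=> n_gt0; have n0 : 0 < INR n by apply/lt_0_INR/ltP.
rewrite /vsub big_Rminus big_Rconst_card card_ord /vmean -Rmult_assoc Rinv_r; last lra.
by rewrite Rmult_1_l; exact: Rminus_diag.
Qed.

Lemma sum_sqnorm_centered_le n d (a : 'I_n -> vec d) : (0 < n)%N ->
  \big[Rplus/0]_(i < n) sqnorm (vsub (a i) (vmean a)) <= \big[Rplus/0]_(i < n) sqnorm (a i).
Proof.
move=> n_gt0; rewrite /sqnorm /inner exchange_big [X in _ <= X]exchange_big /=.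
by apply: big_Rle => k _; exact: (big_sq_centered_le (fun i => a i k)).
Qed.

Section SagaStep.
Variables (n d b : nat) (L mu rho eta : R).
Variables (fs : 'I_n -> vec d -> R) (gs : 'I_n -> vec d -> vec d).
Variables (dom : vec d -> Prop) (h : vec d -> R) (xstar : vec d) (prox : vec d -> vec d).
Hypotheses (n_gt0 : (0 < n)%N) (b_gt0 : (0 < b)%N) (b_le_n : (b <= n)%N).
Hypotheses (L_gt0 : 0 < L) (mu_gt0 : 0 < mu).
Hypothesis fs_grad : forall i, is_gradient (fs i) (gs i).
Hypothesis gs_lip : forall i, lipschitz_grad L (gs i).
Hypothesis h_convex : convex_on dom h.
Hypothesis xstar_min : forall y, dom y -> favg fs xstar + h xstar <= favg fs y + h y.
Hypothesis F_PL : is_PL fs gs dom h (favg fs xstar + h xstar) mu.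
Hypotheses (rho_gt0 : 0 < rho) (rho_le : rho <= 1 / 5).
Hypothesis rho_cond : 16 * INR n ^ 2 * rho ^ 2 / INR b ^ 3 + rho <= 1.
Hypothesis eta_def : eta = rho / L.
Hypothesis eta_prox : is_prox dom h eta prox.
Implicit Types (x : vec d) (al : 'I_n -> vec d).

Local Notation gap := (gap fs h xstar).

Let n0 : 0 < INR n. Proof. exact/lt_0_INR/ltP. Qed.
Let b0 : 0 < INR b. Proof. exact/lt_0_INR/ltP. Qed.
Let eta_gt0 : 0 < eta. Proof. by rewrite eta_def; apply: Rdiv_lt_0_compat. Qed.

Definition anchor_dev x al := / INR n * \big[Rplus/0]_(j < n) sqnorm (vsub x (al j)).

Definition saga_estimate x al (Is : b.-tuple 'I_n) : vec d := fun k =>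
  / INR b * \big[Rplus/0]_(i <- Is) (gs i x k - gs i (al i) k) +
  / INR n * \big[Rplus/0]_(i < n) gs i (al i) k.

Lemma saga_stepE x al hist Is Js :
  saga_step gs eta prox (x, al, hist) (Is, Js) =
  (prox (vsub x (vscale eta (saga_estimate x al Is))),
   (fun j => if j \in tval Js then x else al j), rcons hist x).
Proof. by []. Qed.

Lemma anchor_dev_ge0 x al : 0 <= anchor_dev x al.
Proof.
apply: Rmult_le_pos; first exact/Rlt_le/Rinv_0_lt_compat.
by apply: big_Rge0 => j _; apply: sqnorm_ge0.
Qed.

Lemma expect_saga_error_le x al :
  expect (fun Is : b.-tuple 'I_n => sqnorm (vsub (gavg gs x) (saga_estimate x al Is)))
    <= L ^ 2 / INR b * anchor_dev x al.
Proof.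
pose a i := vsub (gs i x) (gs i (al i)).
pose zeta i := vsub (a i) (vmean a).
have error Is : vsub (gavg gs x) (saga_estimate x al Is) =
    vscale (- / INR b) (tuple_sum zeta Is).
  apply: functional_extensionality => k.
  rewrite /vsub /vscale /tuple_sum /saga_estimate /gavg /zeta /a /vmean /vsub /=.
  by rewrite !big_Rminus big_Rconst size_tuple; field; lra.
under eq_expect => Is do rewrite error sqnormZ.
rewrite expectZ (expect_sqnorm_tuple_sum n_gt0 (fun k => vmean_centered a k n_gt0)).
have a_le : \big[Rplus/0]_(i < n) sqnorm (a i) <=
    L ^ 2 * \big[Rplus/0]_(i < n) sqnorm (vsub x (al i)).
  by rewrite big_distrr; apply: big_Rle => i _; apply: lipschitz_grad_sqnorm.
have := sum_sqnorm_centered_le a n_gt0; rewrite /anchor_dev -/zeta => zeta_le.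
set Sz := \big[Rplus/0]_(i < n) sqnorm (zeta i) in zeta_le *.
set Sx := \big[Rplus/0]_(i < n) sqnorm (vsub x (al i)) in a_le *.
rewrite (_ : _ * (INR b * _) = / INR b * / INR n * Sz); last by field; lra.
rewrite (_ : L ^ 2 / INR b * _ = / INR b * / INR n * (L ^ 2 * Sx)); last by field; lra.
apply: Rmult_le_compat_l; last lra.
by apply: Rmult_le_pos; apply/Rlt_le/Rinv_0_lt_compat.
Qed.

Definition survival := (1 - / INR n) ^ b.

Lemma survival_bounds : 0 <= survival /\ survival * (1 + INR b / INR n) <= 1.
Proof.
have n1 : 1 <= INR n by apply: (le_INR 1); apply/leP.
have inv01 : 0 <= / INR n <= 1.
  by split; [apply/Rlt_le/Rinv_0_lt_compat | rewrite -Rinv_1; apply: Rinv_le_contravar]; lra.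
split; first by apply: pow_le; lra.
by have := Bernoulli_pow_le1 b inv01; rewrite /survival /Rdiv Rmult_comm.
Qed.

Lemma expect_anchor_dev_le x' x al beta : 0 < beta ->
  expect (fun Js : b.-tuple 'I_n => anchor_dev x' (fun j => if j \in tval Js then x else al j))
    <= (1 + survival * beta) * sqnorm (vsub x' x) + survival * (1 + / beta) * anchor_dev x al.
Proof.
move=> beta0; have i0 : 'I_n := Ordinal n_gt0.
have [q0 _] := survival_bounds.
rewrite /anchor_dev expectZ expect_sum.
set A := sqnorm (vsub x' x).
have anchor j :
    expect (fun Js : b.-tuple 'I_n => sqnorm (vsub x' (if j \in tval Js then x else al j)))
    = A + (sqnorm (vsub x' (al j)) - A) * survival.
  have e Js : sqnorm (vsub x' (if j \in tval Js then x else al j)) =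
      A + (sqnorm (vsub x' (al j)) - A) * (if j \in tval Js then 0 else 1).
    by case: (j \in tval Js); rewrite /A; ring.
  under eq_expect => Js do rewrite e.
  by rewrite expectD (expect_cst (nseq_tuple b i0)) expectZ expect_notin_tuple.
under eq_bigr => j _ do rewrite anchor.
have anchor_le j : A + (sqnorm (vsub x' (al j)) - A) * survival <=
    (1 + survival * beta) * A + survival * (1 + / beta) * sqnorm (vsub x (al j)).
  have := sqnormD_le (vsub x' x) (vsub x (al j)) beta0.
  have -> : vadd (vsub x' x) (vsub x (al j)) = vsub x' (al j) by vext.
  by rewrite -/A; nra.
apply: (Rle_trans _ (/ INR n * \big[Rplus/0]_(j < n)
    ((1 + survival * beta) * A + survival * (1 + / beta) * sqnorm (vsub x (al j))))).
  apply: Rmult_le_compat_l; first exact/Rlt_le/Rinv_0_lt_compat.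
  by apply: big_Rle => j _; apply: anchor_le.
rewrite big_split /= big_Rconst_card card_ord -big_distrr /=.
by set S := \big[Rplus/0]_(j < n) _; right; field; lra.
Qed.

Definition anchor_weight := 2 * eta * L ^ 2 * INR n / INR b ^ 2.

Definition lyapunov (st : saga_state n d) : R :=
  let: (x, al, hist) := st in
  gap x + anchor_weight * anchor_dev x al + mu * eta * \big[Rplus/0]_(y <- hist) gap y.

(* the Young parameter in
   ||x' - alpha_j||^2 <= (1 + beta) ||x' - x||^2 + (1 + 1/beta) ||x - alpha_j||^2 *)
Let beta := 2 * INR n / INR b.

Let anchor_weight_gt0 : 0 < anchor_weight.
Proof.
rewrite /anchor_weight; apply: Rdiv_lt_0_compat; last exact: pow_lt.
by apply: Rmult_lt_0_compat => //; apply: Rmult_lt_0_compat; [lra | apply: pow_lt].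
Qed.

Let etaL_lt1 : eta * L < 1.
Proof. by rewrite eta_def /Rdiv Rmult_assoc Rinv_l; lra. Qed.

Lemma lyapunov_rcons x al hist x' al' : lyapunov (x', al', rcons hist x) =
  gap x' + anchor_weight * anchor_dev x' al' +
  mu * eta * (\big[Rplus/0]_(y <- hist) gap y + gap x).
Proof. by rewrite /lyapunov -cats1 big_cat big_seq1. Qed.

Lemma expect_lyapunov_anchor_update x al hist Is : dom x ->
  expect (fun Js : b.-tuple 'I_n => lyapunov (saga_step gs eta prox (x, al, hist) (Is, Js))) <=
  (1 - mu * eta) * gap x + eta / 2 * sqnorm (vsub (gavg gs x) (saga_estimate x al Is))
  + anchor_weight * (survival * (1 + / beta)) * anchor_dev x al
  + mu * eta * (\big[Rplus/0]_(y <- hist) gap y + gap x).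
Proof.
move=> domx; have i0 : 'I_n := Ordinal n_gt0.
set x' := prox (vsub x (vscale eta (saga_estimate x al Is))).
rewrite (eq_expect (fun Js => f_equal lyapunov (saga_stepE x al hist Is Js))).
rewrite (eq_expect (fun Js : b.-tuple 'I_n =>
  lyapunov_rcons x al hist x' (fun j => if j \in tval Js then x else al j))).
rewrite expectD expectD expectZ !(expect_cst (nseq_tuple b i0)).
have beta0 : 0 < beta by apply: Rdiv_lt_0_compat; lra.
have anchor := expect_anchor_dev_le x' x al beta0.
have descent := prox_step_gap_le n_gt0 L_gt0 mu_gt0 eta_gt0 fs_grad gs_lip h_convex xstar_min
  F_PL eta_prox etaL_lt1 (saga_estimate x al Is) domx.
rewrite -/x' in descent.
have b1 : 1 <= INR b by apply: (le_INR 1); apply/leP.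
have bn : INR b <= INR n by apply/le_INR/leP.
have := saga_distance_balance (conj b1 bn) (conj rho_gt0 rho_le) rho_cond L_gt0 eta_def
  (proj1 survival_bounds) (proj2 survival_bounds).
rewrite -/beta -/anchor_weight => balance; cbv zeta in balance.
apply: (Rle_trans _ (gap x' + anchor_weight * ((1 + survival * beta) * sqnorm (vsub x' x)
    + survival * (1 + / beta) * anchor_dev x al)
    + mu * eta * (\big[Rplus/0]_(y <- hist) gap y + gap x))).
  apply/Rplus_le_compat_r/Rplus_le_compat_l/Rmult_le_compat_l; last exact: anchor.
  exact: Rlt_le.
have := Rmult_le_compat_r _ _ _ (sqnorm_ge0 (vsub x' x)) balance.
by lra.
Qed.

Lemma expect_lyapunov_step_le x al hist : dom x ->
  expect (fun w : step_rand n b => lyapunov (saga_step gs eta prox (x, al, hist) w))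
    <= lyapunov (x, al, hist).
Proof.
move=> domx; have i0 : 'I_n := Ordinal n_gt0.
rewrite expect_pair.
apply: (Rle_trans _ _ _ (le_expect (fun Is =>
  expect_lyapunov_anchor_update al hist Is domx))).
rewrite expectD expectD expectD (expectZ (eta / 2)) !(expect_cst (nseq_tuple b i0)).
have bn : INR b <= INR n by apply/le_INR/leP.
have := saga_variance_balance (conj b0 bn) L_gt0 eta_gt0
  (proj1 survival_bounds) (proj2 survival_bounds).
rewrite -/beta -/anchor_weight => balance; cbv zeta in balance.
apply: (Rle_trans _ ((1 - mu * eta) * gap x + eta / 2 * (L ^ 2 / INR b * anchor_dev x al)
    + anchor_weight * (survival * (1 + / beta)) * anchor_dev x al
    + mu * eta * (\big[Rplus/0]_(y <- hist) gap y + gap x))).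
  apply/Rplus_le_compat_r/Rplus_le_compat_r/Rplus_le_compat_l/Rmult_le_compat_l; first lra.
  exact: expect_saga_error_le.
have := Rmult_le_compat_r _ _ _ (anchor_dev_ge0 x al) balance.
have := Rmult_le_pos _ _ (Rlt_le _ _ (Rmult_lt_0_compat _ _ mu_gt0 eta_gt0))
  (gap_ge0 xstar_min domx).
rewrite /lyapunov.
by nra.
Qed.

(** * Epochs and restarts *)

Local Notation step := (@saga_step n d b gs eta prox).

Lemma foldl_saga_step_dom x0 st steps : dom x0 -> dom st.1.1 ->
  (forall i, dom (nth x0 st.2 i)) ->
  dom (foldl step st steps).1.1 /\ forall i, dom (nth x0 (foldl step st steps).2 i).
Proof.
move=> domx0; elim: steps st => [|[Is Js] steps IH] [[x al] hist] //= domx domhist.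
apply: IH; first exact: (proj1 (eta_prox _)).
by move=> i; rewrite nth_rcons; do 2!case: ifP => // _.
Qed.

Lemma size_foldl_saga_step st steps : size (foldl step st steps).2 = (size st.2 + size steps)%N.
Proof.
elim: steps st => [|[Is Js] steps IH] [[x al] hist]; first by rewrite addn0.
by rewrite /= IH /= size_rcons addSnnS.
Qed.

Lemma expect_lyapunov_foldl_le T st : dom st.1.1 ->
  expect (fun steps : T.-tuple (step_rand n b) => lyapunov (foldl step st steps)) <= lyapunov st.
Proof.
elim: T st => [|T IH] st domst; first by rewrite expect_tuple0 /=; lra.
rewrite expect_tupleS.
apply: (Rle_trans _ (expect (fun w : step_rand n b => lyapunov (step st w)))).
  apply: le_expect => w; apply: IH.
  by case: st domst => [[x al] hist] _; case: w => Is Js; exact: (proj1 (eta_prox _)).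
by case: st domst => [[x al] hist] /=; exact: expect_lyapunov_step_le.
Qed.

Lemma mean_gap_le_lyapunov x0 x al hist : dom x -> (0 < size hist)%N ->
  / INR (size hist) * \big[Rplus/0]_(i < size hist) gap (nth x0 hist i)
    <= / (mu * eta * INR (size hist)) * lyapunov (x, al, hist).
Proof.
move=> domx size_gt0; have T0 : 0 < INR (size hist) by apply/lt_0_INR/ltP.
have theta0 : 0 < mu * eta by apply: Rmult_lt_0_compat.
have : mu * eta * \big[Rplus/0]_(y <- hist) gap y <= lyapunov (x, al, hist).
  have := gap_ge0 xstar_min domx.
  have := Rmult_le_pos _ _ (Rlt_le _ _ anchor_weight_gt0) (anchor_dev_ge0 x al).
  by rewrite /lyapunov; lra.
rewrite (big_nth x0) big_mkord => sum_le.
rewrite Rinv_mult (Rmult_comm (/ (mu * eta))) Rmult_assoc.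
apply: Rmult_le_compat_l; first exact/Rlt_le/Rinv_0_lt_compat.
apply: (Rmult_le_reg_l (mu * eta)) => //.
by rewrite -Rmult_assoc Rinv_r; lra.
Qed.

(* The output of an epoch is a uniformly chosen iterate, so its expected gap is the
   average of the telescoped bound on the Lyapunov function. *)
Lemma expect_prox_saga_gap_le T x0 : dom x0 -> (0 < T)%N ->
  expect (fun w : epoch_rand n b T => gap (prox_saga gs eta prox x0 w))
    <= gap x0 / (mu * eta * INR T).
Proof.
move=> domx0 T_gt0; have T0 : 0 < INR T by apply/lt_0_INR/ltP.
have theta0 : 0 < mu * eta by apply: Rmult_lt_0_compat.
set st0 : saga_state n d := (x0, (fun _ => x0), [::]).
have lyap0 : lyapunov st0 = gap x0.
  by rewrite /st0 /lyapunov /anchor_dev big_nil big1 => [|j _]; [ring | exact: sqnorm_subrr].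
rewrite expect_pair.
apply: (Rle_trans _ (expect (fun steps : T.-tuple (step_rand n b) =>
    / (mu * eta * INR T) * lyapunov (foldl step st0 steps)))).
  apply: le_expect => steps.
  rewrite expect_ordE /prox_saga -/st0.
  have hist0 i : dom (nth x0 st0.2 i) by rewrite nth_nil.
  have [domx _] := foldl_saga_step_dom (st := st0) steps domx0 domx0 hist0.
  have : size (foldl step st0 steps).2 = T.
    by rewrite size_foldl_saga_step (size_tuple steps).
  case: (foldl step st0 steps) domx => [[x al] hist] /= domx hist_size.
  rewrite -hist_size; apply: mean_gap_le_lyapunov => //.
  by rewrite hist_size.
rewrite expectZ /Rdiv Rmult_comm -lyap0.
apply: Rmult_le_compat_r; first by apply/Rlt_le/Rinv_0_lt_compat; nra.
exact: expect_lyapunov_foldl_le.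
Qed.

Lemma prox_saga_dom T x0 (w : epoch_rand n b T) : dom x0 -> dom (prox_saga gs eta prox x0 w).
Proof.
case: w => steps a domx0; rewrite /prox_saga.
have hist0 i : dom (nth x0 [::] i) by rewrite nth_nil.
have [_] := foldl_saga_step_dom (st := (x0, fun _ => x0, [::])) steps domx0 domx0 hist0.
by case: foldl => [[x al] hist] /= /(_ a).
Qed.

Lemma expect_pl_saga_gap_le T K x0 : (0 < T)%N -> 2 <= mu * eta * INR T -> dom x0 ->
  expect (fun w : K.-tuple (epoch_rand n b T) => gap (pl_saga gs eta prox x0 w))
    <= gap x0 / 2 ^ K.
Proof.
move=> T_gt0 epoch_long; elim: K x0 => [|K IH] x0 domx0.
  by rewrite expect_tuple0 /pl_saga /=; lra.
rewrite expect_tupleS.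
apply: (Rle_trans _ (expect (fun w : epoch_rand n b T =>
    / 2 ^ K * gap (prox_saga gs eta prox x0 w)))).
  apply: le_expect => w; rewrite Rmult_comm.
  exact: (IH _ (prox_saga_dom w domx0)).
have pow0 : 0 < 2 ^ K by apply: pow_lt; lra.
rewrite expectZ (_ : gap x0 / 2 ^ K.+1 = / 2 ^ K * (gap x0 / 2)); last first.
  by rewrite -tech_pow_Rmult /Rdiv Rinv_mult; ring.
apply: Rmult_le_compat_l; first exact/Rlt_le/Rinv_0_lt_compat.
apply: (Rle_trans _ _ _ (expect_prox_saga_gap_le domx0 T_gt0)).
apply: Rmult_le_compat_l; first exact: (gap_ge0 xstar_min domx0).
by apply: (Rinv_le_contravar 2); lra.
Qed.

End SagaStep.

Lemma ceilR_spec r : 0 < r -> (0 < Z.to_nat (ceilR r))%N /\ r <= INR (Z.to_nat (ceilR r)).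
Proof.
move=> r0; have [floor_le _] := base_Int_part (- r).
have r_le : r <= IZR (ceilR r) by rewrite /ceilR opp_IZR; lra.
have ceil_gt0 : (0 < ceilR r)%Z by apply: lt_0_IZR; lra.
have ceilE : INR (Z.to_nat (ceilR r)) = IZR (ceilR r).
  by rewrite INR_IZR_INZ Znat.Z2Nat.id //; lia.
by rewrite ceilE; split => //; apply/ltP/INR_lt; rewrite ceilE /=; lra.
Qed.

Theorem theorem9 (n d b K : nat) (L mu rho : R)
  (fs : 'I_n -> vec d -> R) (gs : 'I_n -> vec d -> vec d)
  (dom : vec d -> Prop) (h : vec d -> R)
  (xstar x0 : vec d) (prox : vec d -> vec d) :
  (1 <= n)%N -> (1 <= d)%N -> (1 <= b)%N -> (b <= n)%N -> (1 <= K)%N ->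
  0 < L ->
  (forall i, is_gradient (fs i) (gs i)) ->
  (forall i, lipschitz_grad L (gs i)) ->
  proper_lsc_convex_closed_dom dom h ->
  dom xstar -> (forall y, dom y -> favg fs xstar + h xstar <= favg fs y + h y) ->
  0 < mu ->
  is_PL fs gs dom h (favg fs xstar + h xstar) mu ->
  0 < rho -> rho <= 1 / 5 ->
  16 * (INR n)^2 * rho^2 / (INR b)^3 + rho <= 1 ->
  is_prox dom h (rho / L) prox ->
  dom x0 ->
  let T := Z.to_nat (ceilR (6 * L / (mu * rho))) in
  expect (fun w : K.-tuple (epoch_rand n b T) =>
            favg fs (pl_saga gs (rho / L) prox x0 w)
              + h (pl_saga gs (rho / L) prox x0 w)
            - (favg fs xstar + h xstar))
    <= (favg fs x0 + h x0 - (favg fs xstar + h xstar)) / 2 ^ K.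
Proof.
move=> n_gt0 _ b_gt0 b_le_n _ L_gt0 fs_grad gs_lip [_ [h_convex _]] _ xstar_min mu_gt0 F_PL
  rho_gt0 rho_le rho_cond eta_prox domx0 T.
have [T_gt0 T_ge] : (0 < T)%N /\ 6 * L / (mu * rho) <= INR T.
  by apply: ceilR_spec; apply: Rdiv_lt_0_compat; [lra | exact: Rmult_lt_0_compat].
have epoch_long : 2 <= mu * (rho / L) * INR T.
  have -> : mu * (rho / L) * INR T = mu * rho / L * INR T by rewrite /Rdiv; ring.
  have : mu * rho / L * (6 * L / (mu * rho)) = 6 by field; lra.
  have : 0 < mu * rho / L by apply: Rdiv_lt_0_compat => //; exact: Rmult_lt_0_compat.
  by nra.
exact: (expect_pl_saga_gap_le n_gt0 b_gt0 b_le_n L_gt0 mu_gt0 fs_grad gs_lip h_convex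
  xstar_min F_PL rho_gt0 rho_le rho_cond (erefl _) eta_prox K T_gt0 epoch_long domx0).
Qed.
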